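(* Let $G$ be a finite simple undirected graph and $r<s$ positive integers. Run the procedure set-k on $(G,r,s)$ and let $R_1,R_2,\dots$ be the $K_r$s of $G$ in the order in which they are processed. Then the sequence $\kappa(R_1),\kappa(R_2),\dots$ is monotonically non-decreasing.
   Context: A $K_r$ is an $r$-clique of $G$. Procedure set-k$(G,r,s)$: enumerate all $K_r$s and $K_s$s of $G$; for every $K_r$ $R$ initialize $\delta(R)$ to the number of $K_s$s containing $R$; mark every $K_r$ unprocessed. Then repeat until all $K_r$s are processed: pick an unprocessed $K_r$ $R$ with minimum current $\delta(R)$ (ties broken arbitrarily); set $\kappa(R)=\delta(R)$; for each $K_s$ $S$ containing $R$: if some $K_r$ contained in $S$ is already marked processed, skip $S$; otherwise, for each $K_r$ $R'\subset S$ with $R'\neq R$, if $\delta(R')>\delta(R)$ then decrease $\delta(R')$ by $1$. Finally mark $R$ processed. The output is the array $\kappa(\cdot)$. *)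

From mathcomp Require Import all_boot.
Set Implicit Arguments. Unset Strict Implicit. Unset Printing Implicit Defensive.

Section SetK.
Variables (T : finType) (e : rel T).

Definition is_clique (k : nat) (A : {set T}) : bool :=
  (#|A| == k) && [forall x in A, forall y in A, (x != y) ==> e x y].

Definition Kset (k : nat) : {set {set T}} := [set A | is_clique k A].

Definition init_delta (s : nat) (R : {set T}) : nat :=
  #|[set S in Kset s | R \subset S]|.

(* Processing one K_s S containing R (the K_r being processed), with current
   set of processed K_r's [proc] and current delta. *)
Definition upd_S (r : nat) (proc : {set {set T}}) (R : {set T})
    (delta : {set T} -> nat) (S : {set T}) : {set T} -> nat :=
  if [exists R' in Kset r, (R' \subset S) && (R' \in proc)] then delta
  else fun R' =>
    if [&& R' \in Kset r, R' \subset S, R' != R & delta R < delta R']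
    then (delta R').-1 else delta R'.

(* [setk_exec r s proc delta Rs ks]: starting from the state where [proc] is
   the set of processed K_r's and [delta] the current delta array, the
   procedure set-k can (for some tie-breaking and some order of iteration over
   the K_s's) go on to process the K_r's in the order [Rs], assigning the
   kappa values [ks] (ks_i = kappa (Rs_i)), until all K_r's are processed. *)
Inductive setk_exec (r s : nat) :
    {set {set T}} -> ({set T} -> nat) -> seq {set T} -> seq nat -> Prop :=
| setk_done (proc : {set {set T}}) (delta : {set T} -> nat) :
    Kset r \subset proc -> setk_exec r s proc delta [::] [::]
| setk_step (proc : {set {set T}}) (delta : {set T} -> nat) (R : {set T})
    (ss : seq {set T}) (Rs : seq {set T}) (ks : seq nat) :
    R \in Kset r -> R \notin proc ->
    (forall R', R' \in Kset r -> R' \notin proc -> delta R <= delta R') ->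
    perm_eq ss (enum [set S in Kset s | R \subset S]) ->
    setk_exec r s (R |: proc) (foldl (upd_S r proc R) delta ss) Rs ks ->
    setk_exec r s proc delta (R :: Rs) (delta R :: ks).

End SetK.

From mathcomp Require Import all_boot.

(* Processing R never changes delta R, and it only decrements values strictly
   above delta R, so no value drops below delta R. Since kappa R = delta R is
   the minimum over the unprocessed K_r's, this minimum can only grow; no
   property of the graph or of r, s is needed. *)

Section ProcessOne.
Variables (T : finType) (e : rel T) (r : nat).
Variables (proc : {set {set T}}) (R : {set T}).

Lemma upd_S_self (d : {set T} -> nat) (S : {set T}) :
  upd_S e r proc R d S R = d R.
Proof. by rewrite /upd_S; case: ifP => // _; rewrite eqxx !andbF. Qed.

Lemma upd_S_floor (d : {set T} -> nat) (S x : {set T}) :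
  d R <= d x -> d R <= upd_S e r proc R d S x.
Proof.
rewrite /upd_S; case: ifP => // _ Rx.
by case: ifP => // /and4P [_ _ _ lt]; rewrite -ltnS (ltn_predK lt).
Qed.

Lemma foldl_upd_S_self (ss : seq {set T}) (d : {set T} -> nat) :
  foldl (upd_S e r proc R) d ss R = d R.
Proof. by elim: ss d => //= S ss IH d; rewrite IH upd_S_self. Qed.

Lemma foldl_upd_S_floor (ss : seq {set T}) (d : {set T} -> nat) (x : {set T}) :
  d R <= d x -> d R <= foldl (upd_S e r proc R) d ss x.
Proof.
elim: ss d => //= S ss IH d Rx.
by rewrite -(upd_S_self d S); apply/IH; rewrite upd_S_self upd_S_floor.
Qed.

End ProcessOne.

Lemma setk_exec_path (T : finType) (e : rel T) (r s : nat) proc delta Rs ks :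
  setk_exec e r s proc delta Rs ks ->
  forall b, (forall x, x \in Kset e r -> x \notin proc -> b <= delta x) ->
  path leq b ks.
Proof.
elim=> {proc delta Rs ks} [//|proc delta R ss Rs ks RK Rp Rmin _ _ IH] b Hb /=.
rewrite (Hb _ RK Rp) /=; apply: IH => x xK.
rewrite in_setU1 negb_or => /andP [_ xp].
by apply/foldl_upd_S_floor/Rmin.
Qed.

Theorem claim1 (T : finType) (e : rel T) (r s : nat)
    (e_sym : symmetric e) (e_irr : irreflexive e)
    (r_pos : 0 < r) (r_lt_s : r < s)
    (Rs : seq {set T}) (ks : seq nat) :
  setk_exec e r s set0 (init_delta e s) Rs ks -> sorted leq ks.
Proof.
move=> /setk_exec_path /(_ 0 (fun _ _ _ => leq0n _)).
by case: ks => //= k ks /andP [].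
Qed.
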